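(* Let $T\in\mathbb{T}$. (a) Let $v_1,\dots,v_k$ be the non-pendant vertices of $T$, with $v_i$ adjacent to exactly $t_i$ pendant vertices. Then the degree of $v_i$ in $T^{\#}$ is $t_i$. (b) If $T$ is neither a star nor a corona tree, then $T^{\#}$ contains at least one cycle of length $4$.
   Context: $\mathbb{T}$ is the class of simple undirected weighted trees $T$ (nonzero real weights on edges) such that (i) $T$ has at least one non-pendant vertex, and (ii) every non-pendant vertex of $T$ is adjacent to at least one pendant vertex (a vertex of degree one). The adjacency matrix $A$ of $T$ has $(i,j)$ entry equal to the weight of edge $v_iv_j$, or $0$ if no edge; $A^{\#}$ is its group inverse (unique $X$ with $AXA=A$, $XAX=X$, $AX=XA$); $T^{\#}$ is the weighted graph on the vertex set of $T$ with $v_iv_j$ an edge iff $(A^{\#})_{ij}\neq 0$, weighted by that entry. A corona tree is a tree obtained from some tree by attaching one new pendant vertex to each of its vertices. *)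

From HB Require Import structures.
From mathcomp Require Import all_boot all_order all_algebra.
Set Implicit Arguments. Unset Strict Implicit. Unset Printing Implicit Defensive.
Import Order.TTheory GRing.Theory Num.Theory.
Local Open Scope ring_scope.

Definition adjm (R : ringType) (n : nat) (M : 'M[R]_n) : rel 'I_n :=
  fun i j => (i != j) && (M i j != 0).

Definition deg (T : finType) (e : rel T) (v : T) : nat := #|[set u | e v u]|.

Definition pendant (T : finType) (e : rel T) (v : T) : bool := deg e v == 1%N.

Definition acyclic (T : finType) (e : rel T) : Prop :=
  forall s : seq T, (2 < size s)%N -> uniq s -> ~~ cycle e s.

Definition has_cycle4 (T : finType) (e : rel T) : Prop :=
  exists s : seq T, [/\ size s = 4%N, uniq s & cycle e s].

(* A is the adjacency matrix of a simple undirected weighted tree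
   (nonzero weights on edges, zero off edges) *)
Definition weighted_tree (R : ringType) (n : nat) (A : 'M[R]_n) : Prop :=
  [/\ A^T = A, (forall i, A i i = 0),
      (forall i j, connect (adjm A) i j) & acyclic (adjm A)].

Definition in_class_T (R : ringType) (n : nat) (A : 'M[R]_n) : Prop :=
  [/\ weighted_tree A,
      (exists v, ~~ pendant (adjm A) v) &
      (forall v, ~~ pendant (adjm A) v ->
         exists u, adjm A v u && pendant (adjm A) u)].

Definition is_group_inverse (R : ringType) (n : nat) (A X : 'M[R]_n) : Prop :=
  [/\ A *m X *m A = A, X *m A *m X = X & A *m X = X *m A].

Definition is_star (R : ringType) (n : nat) (A : 'M[R]_n) : Prop :=
  exists c : 'I_n, forall v, v != c -> adjm A c v.

(* corona tree: there is a nonempty set H of vertices (the original tree)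
   such that every vertex outside H is pendant with its neighbour in H, and
   every vertex of H has exactly one neighbour outside H. *)
Definition is_corona (R : ringType) (n : nat) (A : 'M[R]_n) : Prop :=
  exists H : {set 'I_n},
    [/\ H != set0,
        (forall v, v \notin H ->
           pendant (adjm A) v /\ (forall u, adjm A v u -> u \in H)) &
        (forall u, u \in H -> #|[set v | adjm A u v & v \notin H]| = 1%N)].

(* Put the non-pendant ("core") vertices first.  Two pendant vertices are never
   adjacent, so A = [[M, B], [B^T, 0]], and since every pendant vertex has a
   single neighbour the rows of B have disjoint supports: B B^T = D is diagonal,
   and invertible because every core vertex has a pendant neighbour.  With
   S = D^-1 B, the symmetric matrix Y = S + S^T - S^T M S satisfies
   A Y = I_core + B^T S; this matrix is symmetric and fixes both A and Y, which
   makes Y the group inverse.  Row v of Y for a core v is row v of S, supported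
   exactly on the pendant neighbours of v; for pendants p, q with neighbours a, b
   one gets Y p q = - S a p * M a b * S b q, nonzero iff a ~ b.  If T is not a
   corona some core u has two pendant neighbours p1, p2, if it is not a star u
   has a core neighbour w with a pendant neighbour q, and u p1 q p2 is a 4-cycle
   of T#. *)

From HB Require Import structures.
From mathcomp Require Import all_boot all_order all_algebra.
Set Implicit Arguments. Unset Strict Implicit. Unset Printing Implicit Defensive.
Import Order.TTheory GRing.Theory Num.Theory.
Local Open Scope ring_scope.

Lemma group_inverse_unique (R : nzRingType) n (A X Y : 'M[R]_n) :
  is_group_inverse A X -> is_group_inverse A Y -> X = Y.
Proof.
move=> [AXA XAX AX_XA] [AYA YAY AY_YA].
have XXA : X *m X *m A = X by rewrite -mulmxA -AX_XA mulmxA XAX.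
have AAY : A *m A *m Y = A by rewrite -mulmxA AY_YA mulmxA AYA.
have AYY : A *m Y *m Y = Y by rewrite AY_YA YAY.
have XAA : X *m A *m A = A by rewrite -AX_XA AXA.
have -> : X = X *m A *m Y by rewrite -{1}XXA -{1}AAY !mulmxA XXA.
by rewrite -{2}AYY -{2}XAA -!mulmxA (mulmxA A Y Y) AYY.
Qed.

Lemma sym_group_inverse (R : comNzRingType) n (A Y : 'M[R]_n) :
  A^T = A -> Y^T = Y -> (A *m Y)^T = A *m Y ->
  A *m Y *m A = A -> A *m Y *m Y = Y -> is_group_inverse A Y.
Proof.
move=> symA symY symAY AYA AYY.
have YA : Y *m A = A *m Y by rewrite -{1}symY -{1}symA -trmx_mul symAY.
by split; rewrite ?YA.
Qed.

Lemma adjm_sym (R : nzRingType) n (M : 'M[R]_n) : M^T = M -> symmetric (adjm M).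
Proof. by move=> symM i j; rewrite /adjm eq_sym -{1}symM mxE. Qed.

Lemma pendant_nbr_unique (T : finType) (e : rel T) v a b :
  pendant e v -> e v a -> e v b -> a = b.
Proof.
move=> /cards1P [x Nv] eva evb.
have : a \in [set u | e v u] by rewrite inE.
have : b \in [set u | e v u] by rewrite inE.
by rewrite Nv !inE => /eqP -> /eqP ->.
Qed.

Section TreeGroupInverse.

Variables (R : realFieldType) (n : nat) (A : 'M[R]_n).
Hypothesis AT : in_class_T A.

Let symA : A^T = A. Proof. by case: AT => -[]. Qed.
Let A_diag0 i : A i i = 0. Proof. by case: AT => -[]. Qed.
Let A_connected i j : connect (adjm A) i j. Proof. by case: AT => -[]. Qed.

Definition core v := ~~ pendant (adjm A) v.

Lemma closed_adjm_all (S : {pred 'I_n}) x :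
  (forall y z, adjm A y z -> y \in S -> z \in S) -> x \in S -> forall y, y \in S.
Proof.
move=> closedS Sx y; have symC := sym_connect_sym (adjm_sym symA).
by rewrite -(closed_connect (intro_closed symC closedS) (A_connected x y)).
Qed.

Lemma pendant_edge0 p q : pendant (adjm A) p -> pendant (adjm A) q -> A p q = 0.
Proof.
move=> pp pq; case: (eqVneq p q) => [<- | npq]; first exact: A_diag0.
apply: contraTeq isT => Apq.
have Epq : adjm A p q by rewrite /adjm npq Apq.
have Eqp : adjm A q p by rewrite adjm_sym.
have [c cc] : exists c, core c by case: AT.
have /(_ c) : forall y, y \in [set p; q].
  apply: (closed_adjm_all (x := p)); last by rewrite !inE eqxx.
  move=> y z Eyz; rewrite !inE => /orP [] /eqP Ey; subst y.
  - by rewrite (pendant_nbr_unique pp Eyz Epq) eqxx orbT.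
  - by rewrite (pendant_nbr_unique pq Eyz Eqp) eqxx.
by rewrite !inE => /orP [] /eqP Ec; move: cc; rewrite /core Ec ?pp ?pq.
Qed.

Lemma star_of_pendant_nbrs u :
  (forall w, adjm A u w -> pendant (adjm A) w) -> is_star A.
Proof.
move=> pendN; exists u => v nvu.
have /(_ v) : forall y, y \in [pred x | (x == u) || adjm A u x].
  apply: (closed_adjm_all (x := u)); last by rewrite inE eqxx.
  move=> y z Eyz; rewrite !inE => /orP [/eqP Ey | Euy]; first by rewrite -Ey Eyz orbT.
  have Eyu : adjm A y u by rewrite adjm_sym.
  by rewrite (pendant_nbr_unique (pendN y Euy) Eyz Eyu) eqxx.
by rewrite inE (negbTE nvu).
Qed.

Lemma corona_of_pendant_nbrs_le1 :
  (forall u, core u -> #|[set v | adjm A u v & pendant (adjm A) v]| <= 1)%N ->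
  is_corona A.
Proof.
move=> le1; exists [set x | core x]; split.
- by case: AT => _ [c cc] _; apply/set0Pn; exists c; rewrite inE.
- move=> v; rewrite inE negbK => pv; split=> // w Evw; rewrite inE.
  apply: contraT; rewrite negbK => pw.
  by move: Evw; rewrite /adjm (pendant_edge0 pv pw) eqxx andbF.
- move=> u; rewrite inE => cu; apply/eqP; rewrite eqn_leq; apply/andP; split.
    apply: leq_trans (le1 u cu); apply/subset_leq_card/subsetP => v.
    by rewrite !inE negbK.
  case: AT => _ _ /(_ u cu) [p /andP [Eup pp]].
  by apply/card_gt0P; exists p; rewrite !inE Eup negbK.
Qed.

Definition Ablock (a b : bool) : 'M[R]_n :=
  \matrix_(i, j) if (core i == a) && (core j == b) then A i j else 0.

(* [pweight i] is the i-th diagonal entry of D = B B^T, and [S] is D^-1 B. *)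
Local Notation M := (Ablock true true).
Local Notation B := (Ablock true false).

Definition pweight i := \sum_j B i j ^+ 2.

Definition Bdual : 'M[R]_n := \matrix_(i, j) (B i j / pweight i).

Local Notation S := Bdual.

Definition Pcore : 'M[R]_n := \matrix_(i, j) ((i == j) && core i)%:R.

Definition blocked (a b : bool) (X : 'M[R]_n) :=
  forall i j, X i j != 0 -> (core i == a) && (core j == b).

Lemma blocked_tr a b (X : 'M[R]_n) : blocked a b X -> blocked b a X^T.
Proof. by move=> bX i j; rewrite mxE => /bX; rewrite andbC. Qed.

Lemma mul_blocked0 a b c (X Y : 'M[R]_n) :
  blocked a b X -> blocked (~~ b) c Y -> X *m Y = 0.
Proof.
move=> bX bY; apply/matrixP => i j; rewrite !mxE big1 // => k _.
have [->|/bX /andP [_ /eqP Xk]] := eqVneq (X i k) 0; first by rewrite mul0r.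
have [->|/bY /andP [/eqP Yk _]] := eqVneq (Y k j) 0; first by rewrite mulr0.
by move: Yk; rewrite Xk; case: (b).
Qed.

Lemma Pcore_row v (X : 'M[R]_n) j : core v -> (Pcore *m X) v j = X v j.
Proof.
move=> cv; rewrite mxE (bigD1 v) //= big1 => [|k nkv]; last first.
  by rewrite mxE eq_sym (negbTE nkv) mul0r.
by rewrite mxE eqxx cv mul1r addr0.
Qed.

Lemma Pcore_mull b (X : 'M[R]_n) : blocked true b X -> Pcore *m X = X.
Proof.
move=> bX; apply/matrixP => i j; case: (boolP (core i)) => ci; first exact: Pcore_row.
rewrite mxE big1 => [|k _]; last by rewrite mxE (negbTE ci) andbF mul0r.
by apply/esym/eqP; apply: contraNT ci => /bX /andP [/eqP ->].
Qed.

Lemma Pcore_tr : Pcore^T = Pcore.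
Proof.
apply/matrixP => i j; rewrite !mxE.
by case: (eqVneq i j) => [-> | nij]; rewrite ?eqxx // eq_sym (negbTE nij).
Qed.

Lemma Pcore_mulr a (X : 'M[R]_n) : blocked a true X -> X *m Pcore = X.
Proof.
move=> /blocked_tr bXt; apply: (can_inj (@trmxK _ n n)).
by rewrite trmx_mul Pcore_tr (Pcore_mull bXt).
Qed.

Lemma Ablock_blocked a b : blocked a b (Ablock a b).
Proof. by move=> i j; rewrite mxE; case: ifP => //; rewrite eqxx. Qed.

Lemma Pcore_blocked : blocked true true Pcore.
Proof.
move=> i j; rewrite mxE; case: (eqVneq i j) => [<- | _]; last by rewrite eqxx.
by case: (core i); rewrite ?eqxx.
Qed.

Lemma B_neq0 i j : (B i j != 0) = [&& core i, ~~ core j & A i j != 0].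
Proof. by rewrite mxE; case: (core i); case: (core j); rewrite ?eqxx. Qed.

Lemma B_adjm i j : B i j != 0 -> adjm A i j.
Proof.
rewrite B_neq0 /adjm => /and3P [ci cj ->]; rewrite andbT.
by apply: contraNneq cj => <-.
Qed.

Lemma pweight_neq0 i : core i -> pweight i != 0.
Proof.
move=> ci; case: AT => _ _ /(_ i ci) [p /andP [Eip pp]].
rewrite psumr_eq0 => [|k _]; last exact: sqr_ge0.
apply/allPn; exists p; first by rewrite mem_index_enum.
by move: Eip; rewrite /= sqrf_eq0 B_neq0 /adjm ci /core pp => /andP [_ ->].
Qed.

Lemma Bdual_neq0 i j : (S i j != 0) = (B i j != 0).
Proof.
rewrite mxE; have [-> | Bij] := eqVneq (B i j) 0; first by rewrite mul0r eqxx.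
rewrite mulf_neq0 // invr_neq0 // pweight_neq0 //.
by move: Bij; rewrite B_neq0 => /andP [].
Qed.

Lemma Bdual_blocked : blocked true false S.
Proof. by move=> i j; rewrite Bdual_neq0; apply: Ablock_blocked. Qed.

Lemma B_parent_unique i j k : B i k != 0 -> B j k != 0 -> i = j.
Proof.
move=> Bik Bjk; have /and3P [_ /negbNE pk _] : [&& core i, ~~ core k & A i k != 0].
  by rewrite -B_neq0.
have Eki : adjm A k i by rewrite adjm_sym //; apply: B_adjm.
have Ekj : adjm A k j by rewrite adjm_sym //; apply: B_adjm.
exact: pendant_nbr_unique pk Eki Ekj.
Qed.

Lemma A_decomp : A = M + B + B^T.
Proof.
apply/matrixP => i j; rewrite !mxE.
case ci: (core i); case cj: (core j); rewrite /= ?addr0 ?add0r //.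
  by rewrite -{1}symA mxE.
by rewrite pendant_edge0 ?(negbFE ci) ?(negbFE cj).
Qed.

Lemma B_mul_trS : B *m S^T = Pcore.
Proof.
apply/matrixP => i j.
have -> : (B *m S^T) i j = (\sum_k B i k * B j k) / pweight j.
  rewrite mxE mulr_suml; apply: eq_bigr => k _.
  by rewrite [S^T _ _]mxE [S _ _]mxE mulrA.
rewrite mxE; case: (eqVneq i j) => [<- | nij] /=.
  case: (boolP (core i)) => ci; last first.
    rewrite big1 ?mul0r // => k _; apply/eqP; rewrite mulf_eq0 orbb.
    by apply: contraNT ci; rewrite B_neq0 => /andP [].
  under eq_bigr => k _ do rewrite -expr2.
  by rewrite mulfV // pweight_neq0.
rewrite big1 ?mul0r // => k _.
have [-> | Bik] := eqVneq (B i k) 0; first by rewrite mul0r.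
have [-> | Bjk] := eqVneq (B j k) 0; first by rewrite mulr0.
by move: nij; rewrite (B_parent_unique Bik Bjk) eqxx.
Qed.

Lemma trS_mul_B : S^T *m B = B^T *m S.
Proof.
apply/matrixP => p q; rewrite !mxE; apply: eq_bigr => k _; rewrite !mxE.
by rewrite mulrAC mulrA.
Qed.

Let M_blocked : blocked true true M := @Ablock_blocked true true.
Let B_blocked : blocked true false B := @Ablock_blocked true false.
Let trB_blocked : blocked false true B^T := blocked_tr B_blocked.
Let trS_blocked : blocked false true S^T := blocked_tr Bdual_blocked.

Definition tree_ginv : 'M[R]_n := S + S^T - S^T *m M *m S.

Local Notation Y := tree_ginv.

Lemma M_sym : M^T = M.
Proof. by apply/matrixP => i j; rewrite !mxE andbC -{1}symA mxE. Qed.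

Lemma tree_ginv_sym : Y^T = Y.
Proof.
by rewrite !raddfD raddfN /= !trmx_mul !trmxK M_sym mulmxA [S^T + S]addrC.
Qed.

Lemma A_mul_S : A *m S = M *m S + B^T *m S.
Proof. by rewrite {1}A_decomp !mulmxDl (mul_blocked0 B_blocked Bdual_blocked) addr0. Qed.

Lemma A_mul_trS : A *m S^T = Pcore.
Proof.
rewrite A_decomp !mulmxDl B_mul_trS (mul_blocked0 M_blocked trS_blocked).
by rewrite (mul_blocked0 trB_blocked trS_blocked) add0r addr0.
Qed.

Lemma S_mul_A : S *m A = Pcore.
Proof. by rewrite -[LHS]trmxK trmx_mul symA A_mul_trS Pcore_tr. Qed.

Lemma Pcore_mul_A : Pcore *m A = M + B.
Proof.
rewrite {1}A_decomp !mulmxDr (Pcore_mull M_blocked) (Pcore_mull B_blocked).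
by rewrite (mul_blocked0 Pcore_blocked trB_blocked) addr0.
Qed.

Lemma Pcore_mul_Y : Pcore *m Y = S.
Proof.
rewrite mulmxBr mulmxDr (Pcore_mull Bdual_blocked) !mulmxA.
by rewrite (mul_blocked0 Pcore_blocked trS_blocked) !mul0mx subr0 addr0.
Qed.

Lemma B_mul_Y : B *m Y = Pcore - M *m S.
Proof.
rewrite mulmxBr mulmxDr !mulmxA (mul_blocked0 B_blocked Bdual_blocked).
by rewrite B_mul_trS (Pcore_mull M_blocked) add0r.
Qed.

Lemma A_mul_Y : A *m Y = Pcore + B^T *m S.
Proof.
rewrite mulmxBr mulmxDr !mulmxA A_mul_S A_mul_trS (Pcore_mull M_blocked).
by rewrite addrAC [M *m S + _]addrC addrK addrC.
Qed.

Lemma A_mul_Y_sym : (A *m Y)^T = A *m Y.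
Proof. by rewrite A_mul_Y raddfD /= Pcore_tr trmx_mul trmxK trS_mul_B. Qed.

Lemma A_mul_Y_mul_A : A *m Y *m A = A.
Proof.
rewrite A_mul_Y mulmxDl -mulmxA S_mul_A (Pcore_mulr trB_blocked).
by rewrite Pcore_mul_A -A_decomp.
Qed.

Lemma A_mul_Y_mul_Y : A *m Y *m Y = Y.
Proof.
rewrite A_mul_Y mulmxDl Pcore_mul_Y -trS_mul_B -mulmxA B_mul_Y mulmxBr.
by rewrite (Pcore_mulr trS_blocked) !mulmxA addrA.
Qed.

Lemma tree_ginv_group_inverse : is_group_inverse A Y.
Proof.
exact: sym_group_inverse symA tree_ginv_sym A_mul_Y_sym A_mul_Y_mul_A A_mul_Y_mul_Y.
Qed.

Lemma tree_ginv_core v u : core v -> Y v u = S v u.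
Proof. by move=> cv; rewrite -(Pcore_row Y u cv) Pcore_mul_Y. Qed.

Lemma adjm_tree_ginv_core v u :
  core v -> adjm Y v u = adjm A v u && pendant (adjm A) u.
Proof.
move=> cv; rewrite /adjm tree_ginv_core // Bdual_neq0 B_neq0 cv /core negbK.
by case: (pendant _ u); rewrite ?andbT ?andbF.
Qed.

Lemma trS_mul_entry a p (X : 'M[R]_n) j :
  B a p != 0 -> (S^T *m X) p j = S a p * X a j.
Proof.
move=> Bap; rewrite mxE (bigD1 a) //= big1 ?addr0 ?mxE // => k nka.
rewrite mxE; have [-> | Skp] := eqVneq (S k p) 0; first by rewrite mul0r.
by move: nka; rewrite Bdual_neq0 in Skp; rewrite (B_parent_unique Skp Bap) eqxx.
Qed.

Lemma mul_S_entry b q (X : 'M[R]_n) i :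
  B b q != 0 -> (X *m S) i q = X i b * S b q.
Proof.
move=> Bbq; rewrite mxE (bigD1 b) //= big1 ?addr0 // => l nlb.
have [-> | Slq] := eqVneq (S l q) 0; first by rewrite mulr0.
by move: nlb; rewrite Bdual_neq0 in Slq; rewrite (B_parent_unique Slq Bbq) eqxx.
Qed.

Lemma tree_ginv_pendants a b p q :
  B a p != 0 -> B b q != 0 -> Y p q = - (S a p * M a b * S b q).
Proof.
move=> Bap Bbq.
have S_pendant_row k j : B k j != 0 -> S j =1 (fun _ => 0).
  move=> Bkj l; apply/eqP; apply: contraTT Bkj; rewrite Bdual_neq0 !B_neq0.
  by case/andP=> cj _; rewrite cj andbF.
have -> : Y p q = S p q + S^T p q - (S^T *m M *m S) p q by rewrite !mxE.
rewrite [S^T p q]mxE (S_pendant_row _ _ Bap) (S_pendant_row _ _ Bbq) add0r sub0r.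
by rewrite (mul_S_entry _ _ Bbq) (trS_mul_entry _ _ Bap).
Qed.

Lemma B_pendant_nbr u p :
  core u -> adjm A u p -> pendant (adjm A) p -> B u p != 0.
Proof. by rewrite B_neq0 /core => -> /andP [_ ->] ->. Qed.

Lemma adjm_tree_ginv_pendants a b p q :
  B a p != 0 -> B b q != 0 -> A a b != 0 -> adjm Y p q.
Proof.
move=> Bap Bbq Aab; rewrite /adjm (tree_ginv_pendants Bap Bbq) oppr_eq0.
apply/andP; split.
  apply: contraNneq Aab => epq; move: Bbq; rewrite -epq => Bbp.
  by rewrite (B_parent_unique Bap Bbp) A_diag0.
move: (Bap) (Bbq); rewrite !B_neq0 => /andP [ca _] /andP [cb _].
by rewrite !mulf_neq0 ?Bdual_neq0 // mxE ca cb.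
Qed.

Lemma tree_ginv_cycle4 u w p1 p2 q :
  core u -> core w -> adjm A u w -> adjm A u p1 -> adjm A u p2 -> adjm A w q ->
  pendant (adjm A) p1 -> pendant (adjm A) p2 -> pendant (adjm A) q -> p1 != p2 ->
  has_cycle4 (adjm Y).
Proof.
move=> cu cw Euw Eup1 Eup2 Ewq pp1 pp2 pq np12.
have Bup1 := B_pendant_nbr cu Eup1 pp1.
have Bup2 := B_pendant_nbr cu Eup2 pp2.
have Bwq := B_pendant_nbr cw Ewq pq.
have Auw : A u w != 0 by case/andP: Euw.
have Awu : A w u != 0 by rewrite -{1}symA mxE.
have Yup1 : adjm Y u p1 by rewrite adjm_tree_ginv_core // Eup1.
have Yup2 : adjm Y u p2 by rewrite adjm_tree_ginv_core // Eup2.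
have Yp1q := adjm_tree_ginv_pendants Bup1 Bwq Auw.
have Yqp2 := adjm_tree_ginv_pendants Bwq Bup2 Awu.
have nuq : u != q by apply: contraNneq cu => ->; rewrite /core pq.
exists [:: u; p1; q; p2]; split=> //=.
  rewrite !inE !negb_or nuq np12 (andP Yup1).1 (andP Yup2).1.
  by rewrite (andP Yp1q).1 (andP Yqp2).1.
by rewrite Yup1 Yp1q Yqp2 (adjm_sym tree_ginv_sym) Yup2.
Qed.

End TreeGroupInverse.

Theorem corollary3p7 (R : realFieldType) (n : nat) (A X : 'M[R]_n) :
  in_class_T A -> is_group_inverse A X ->
  (forall v : 'I_n, ~~ pendant (adjm A) v ->
     deg (adjm X) v = #|[set u | adjm A v u && pendant (adjm A) u]|) /\
  (~ is_star A -> ~ is_corona A -> has_cycle4 (adjm X)).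
Proof.
move=> AT /group_inverse_unique /(_ (tree_ginv_group_inverse AT)) ->.
split=> [v cv | not_star not_corona].
  by apply: eq_card => u; rewrite !inE adjm_tree_ginv_core.
have /existsP [u /andP [cu]] :
    [exists u, core A u && (1 < #|[set v | adjm A u v & pendant (adjm A) v]|)%N].
  apply: contraT => /existsPn le1; case: not_corona.
  apply: corona_of_pendant_nbrs_le1 => // u cu.
  by move: (le1 u); rewrite cu ltnNge negbK.
move=> /card_gt1P [p1 [p2 [+ + np12]]].
rewrite !inE => /andP [Eup1 pp1] /andP [Eup2 pp2].
have /existsP [w /andP [Euw cw]] : [exists w, adjm A u w && core A w].
  apply: contraT => /existsPn no_core; case: not_star.
  apply: (star_of_pendant_nbrs AT (u := u)) => w Euw.
  by move: (no_core w); rewrite Euw negbK.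
have [q /andP [Ewq pq]] : exists q, adjm A w q && pendant (adjm A) q.
  by case: AT => _ _; apply.
exact: tree_ginv_cycle4 Euw Eup1 Eup2 Ewq pp1 pp2 pq np12.
Qed.
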